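(* Let $n\ge 2$, $b\ge 2$ and $1\le r<b$ be integers with $n\ge b-r-1$. Then the circulant graph $G_{nb+r,b}$ satisfies $\operatorname{box}(G_{nb+r,b})\le\chi(G_{nb+r,b})$.
   Context: For integers $a\ge 2b\ge 2$, $G_{a,b}$ is the graph with vertex set $\{0,1,\ldots,a-1\}$ in which distinct $u,v$ are adjacent if and only if $u\in\{v+b,v+b+1,\ldots,v+a-b\}$ with addition modulo $a$. The boxicity $\operatorname{box}(G)$ is the minimum nonnegative integer $k$ such that $G$ is isomorphic to the intersection graph of a family of boxes (Cartesian products of $k$ closed real intervals) in $\mathbb{R}^k$. $\chi(G)$ is the chromatic number. *)

From HB Require Import structures.
From Stdlib Require Import Reals.
From mathcomp Require Import all_boot.
Set Implicit Arguments. Unset Strict Implicit. Unset Printing Implicit Defensive.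

Definition Gab (a b : nat) : rel 'I_a :=
  fun u v => (u != v) && (b <= (u + a - v) %% a <= a - b).
Arguments Gab : clear implicits.

Definition colorable (T : finType) (e : rel T) (c : nat) : bool :=
  [exists f : {ffun T -> 'I_c}, [forall x, forall y, e x y ==> (f x != f y)]].

Lemma colorable_card (T : finType) (e : rel T) (irr : irreflexive e) :
  exists c, colorable e c.
Proof.
exists #|T|; apply/existsP; exists [ffun x => enum_rank x].
apply/forallP => x; apply/forallP => y; apply/implyP => exy.
rewrite !ffunE; apply/negP => /eqP /enum_rank_inj exy'.
by move: exy; rewrite exy' irr.
Qed.

Definition chi (T : finType) (e : rel T) (irr : irreflexive e) : nat :=
  ex_minn (colorable_card irr).

(* A representation of the graph (T, e) as the intersection graph of a family
   of boxes in R^k: vertex x is the box prod_{i<k} [lo x i, hi x i], and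
   distinct x, y are adjacent iff their boxes intersect, i.e. the intervals
   intersect in every coordinate. *)
Definition box_rep (T : finType) (e : rel T) (k : nat) : Prop :=
  exists lo hi : T -> nat -> R,
    (forall x i, (i < k)%N -> Rle (lo x i) (hi x i)) /\
    (forall x y, x <> y ->
       (e x y <-> forall i, (i < k)%N ->
          Rle (Rmax (lo x i) (lo y i)) (Rmin (hi x i) (hi y i)))).

(* box(G) <= c  (boxicity is the least k admitting a box representation) *)
Definition boxicity_le (T : finType) (e : rel T) (c : nat) : Prop :=
  exists k, (k <= c)%N /\ box_rep e k.

Lemma Gab_irr (a b : nat) : irreflexive (Gab a b).
Proof. by move=> u; rewrite /Gab eqxx. Qed.

(* Put the vertices on the cycle Z_a, a = n b + r; u ~ v iff their circular
   distance is at least b both ways round.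

   Boxicity <= n + 1: for each origin m in {0, b, ..., n b}, send a vertex at
   position t < b after m to the point t and every other vertex at position t
   to the interval [0, t - b].  Vertices at distance >= b meet in every such
   coordinate, while two vertices at distance d < b are separated by the
   origin just below the nearer one; the n + 1 origins cover the whole cycle.

   Chromatic number >= n + 1: j, j + b, ..., j + (n-1) b is a clique, so an
   n-colouring f would satisfy f (j + n b) = f j, i.e. f (j + r) = f j for all
   j.  Then f is constant on the multiples of r, but the multiple of r just
   above b lies in [b, a - b] and hence is adjacent to 0.

   The hypothesis b - r - 1 <= n is only needed for the reverse inequality
   chi <= n + 1, so it is not used here. *)
From Stdlib Require Import Reals.
From mathcomp Require Import all_boot zify.
Set Implicit Arguments. Unset Strict Implicit. Unset Printing Implicit Defensive.

Definition cdist (a u v : nat) : nat := (u + a - v) %% a.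

Lemma GabE a b (u v : 'I_a) :
  Gab a b u v = (u != v) && (b <= cdist a u v <= a - b).
Proof. by []. Qed.

Lemma cdist_if a u v : u < a -> v < a ->
  cdist a u v = if v <= u then u - v else u + a - v.
Proof.
move=> ua va; rewrite /cdist; case: leqP => h.
- have -> : u + a - v = (u - v) + a by lia.
  by rewrite modnDr modn_small //; lia.
- by rewrite modn_small //; lia.
Qed.

Lemma cdistC a u v : u < a -> v < a -> u != v -> cdist a v u = a - cdist a u v.
Proof. by move=> ua va uv; rewrite !cdist_if //; repeat case: ifP; lia. Qed.

Lemma cdist_gt0 a u v : u < a -> v < a -> u != v -> 0 < cdist a u v.
Proof. by move=> ua va uv; rewrite cdist_if //; case: ifP; lia. Qed.

Lemma cdist_modD a z d : 0 < a -> d < a -> cdist a ((z + d) %% a) (z %% a) = d.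
Proof.
move=> a_gt0 da; have za := ltn_pmod z a_gt0.
rewrite /cdist -addnBA; last exact: ltnW.
rewrite modnDml {1}(divn_eq z a) -!addnA modnMDl.
rewrite [d + _]addnC addnA subnKC; last exact: ltnW.
by rewrite addnC modnDr modn_small.
Qed.

Section IntervalModel.

Variable b : nat.

Definition box_lo (t : nat) : nat := if t < b then t else 0.
Definition box_hi (t : nat) : nat := if t < b then t else t - b.

Definition box_meet (s t : nat) : bool :=
  maxn (box_lo s) (box_lo t) <= minn (box_hi s) (box_hi t).

Lemma box_lo_le_hi t : box_lo t <= box_hi t.
Proof. by rewrite /box_lo /box_hi; case: ifP. Qed.

Lemma box_meetC s t : box_meet s t = box_meet t s.
Proof. by rewrite /box_meet maxnC minnC. Qed.

Variable a : nat.

Lemma box_meet_far x y m : x < a -> y < a -> m < a -> x != y ->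
  b <= cdist a x y <= a - b -> box_meet (cdist a x m) (cdist a y m).
Proof.
move=> xa ya ma xy; rewrite /box_meet /box_lo /box_hi !cdist_if //.
by case: (leqP m x); case: (leqP m y); case: (leqP y x); repeat case: ifP; lia.
Qed.

Lemma box_meet_near x y m : 2 * b <= a -> x < a -> y < a -> m < a ->
  0 < cdist a x y < b -> cdist a y m < b ->
  ~~ box_meet (cdist a x m) (cdist a y m).
Proof.
move=> b2a xa ya ma; rewrite /box_meet /box_lo /box_hi !cdist_if //.
by case: (leqP m x); case: (leqP m y); case: (leqP y x); repeat case: ifP; lia.
Qed.

End IntervalModel.

Lemma INR_le_iff u v : Rle (INR u) (INR v) <-> u <= v.
Proof. by split=> [/INR_le /leP //|/leP]; exact: le_INR. Qed.

Lemma Rmax_INR p q : Rmax (INR p) (INR q) = INR (maxn p q).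
Proof.
case: leqP => h; first by rewrite Rmax_right //; apply/INR_le_iff.
by rewrite Rmax_left //; apply/INR_le_iff/ltnW.
Qed.

Lemma Rmin_INR p q : Rmin (INR p) (INR q) = INR (minn p q).
Proof.
case: leqP => h; first by rewrite Rmin_left //; apply/INR_le_iff.
by rewrite Rmin_right //; apply/INR_le_iff/ltnW.
Qed.

Lemma Gab_box_rep a b k (o : nat -> nat) :
  2 * b <= a -> (forall i, i < k -> o i < a) ->
  (forall y : 'I_a, exists2 i, i < k & cdist a y (o i) < b) ->
  box_rep (Gab a b) k.
Proof.
move=> b2a o_lt cover.
exists (fun (x : 'I_a) i => INR (box_lo b (cdist a x (o i)))).
exists (fun (x : 'I_a) i => INR (box_hi b (cdist a x (o i)))).
split=> [x i _ | x y xy]; first by apply/INR_le_iff; exact: box_lo_le_hi.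
have {}xy : x != y by apply/eqP.
have [xa ya] := (ltn_ord x, ltn_ord y).
rewrite GabE xy andTb; split=> [far i ik | meet_all].
  by rewrite Rmax_INR Rmin_INR; apply/INR_le_iff; apply: box_meet_far; rewrite ?o_lt.
have meet i : i < k -> box_meet b (cdist a x (o i)) (cdist a y (o i)).
  by move=> ik; apply/INR_le_iff; rewrite -Rmax_INR -Rmin_INR; exact: meet_all.
have d_gt0 := cdist_gt0 xa ya xy.
case: (ltnP (cdist a x y) b) => [near | _].
  have [i ik yi] := cover y.
  by move: (meet i ik); rewrite (negbTE (box_meet_near _ _ _ _ _ _)) ?o_lt ?d_gt0.
rewrite leqNgt; apply/negP => far.
have near : 0 < cdist a y x < b.
  by move: far; rewrite (cdistC xa ya xy) !cdist_if //; case: ifP; lia.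
have [i ik xi] := cover x.
by move: (meet i ik); rewrite box_meetC (negbTE (box_meet_near _ _ _ _ _ _)) ?o_lt.
Qed.

Section VertexOfNat.

Variable a : nat.
Hypothesis a_gt0 : 0 < a.

Definition vtx (z : nat) : 'I_a := Ordinal (ltn_pmod z a_gt0).

Lemma Gab_vtxD b z d : 0 < b -> b <= d <= a - b -> Gab a b (vtx (z + d)) (vtx z).
Proof.
move=> b_gt0 bd; have da : d < a by lia.
have dist := cdist_modD z a_gt0 da.
rewrite GabE dist bd andbT; apply/eqP => /(congr1 val) /= same.
by move: dist; rewrite same /cdist addKn modnn; lia.
Qed.

End VertexOfNat.

Section ColouringLowerBound.

Variables n b r c : nat.
Hypotheses (n_ge2 : 1 < n) (b_gt0 : 0 < b) (r_gt0 : 0 < r).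

Local Notation a := (n * b + r).

Let a_gt0 : 0 < a. Proof. lia. Qed.

Local Notation vtx := (vtx a_gt0).

Variable f : 'I_a -> 'I_c.
Hypothesis f_proper : forall x y, Gab a b x y -> f x != f y.

Lemma colour_vtxD_neq z d : b <= d <= a - b -> f (vtx (z + d)) != f (vtx z).
Proof. by move=> bd; apply: f_proper; apply: Gab_vtxD. Qed.

Lemma colour_clique_neq j k l : k < l -> l - k < n ->
  f (vtx (j + l * b)) != f (vtx (j + k * b)).
Proof.
move=> kl lkn.
have -> : j + l * b = j + k * b + (l - k) * b.
  by rewrite -addnA -mulnDl subnKC // ltnW.
apply: colour_vtxD_neq.
have : (l - k).+1 * b <= n * b by rewrite leq_mul2r lkn orbT.
have : 1 * b <= (l - k) * b by rewrite leq_mul2r subn_gt0 kl orbT.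
by rewrite mulSn; lia.
Qed.

Lemma colour_clique_inj j : injective (fun k : 'I_n => f (vtx (j + k * b))).
Proof.
move=> k l /= same; apply: val_inj => /=.
have [kn ln] := (ltn_ord k, ltn_ord l).
case: (ltngtP k l) => // [kl | lk].
- by move: (colour_clique_neq j kl ltac:(lia)); rewrite same eqxx.
- by move: (colour_clique_neq j lk ltac:(lia)); rewrite same eqxx.
Qed.

Section FewColours.

Hypothesis c_le_n : c <= n.

(* The clique j, j + b, ..., j + (n-1) b uses every colour, so j + n b,
   adjacent to all of it but j, must repeat the colour of j. *)
Lemma colour_period_nb j : f (vtx (j + n * b)) = f (vtx j).
Proof.
have onto := inj_card_onto (@colour_clique_inj j).
have /codomP [k fk] : f (vtx (j + n * b)) \in codom (fun k : 'I_n => f (vtx (j + k * b))).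
  by apply: onto; rewrite !card_ord.
have [k0 | k_gt0] := posnP k; first by rewrite fk k0 mul0n addn0.
by move: (colour_clique_neq j (ltn_ord k) ltac:(lia)); rewrite fk eqxx.
Qed.

Lemma colour_period_r z : f (vtx (z + r)) = f (vtx z).
Proof.
rewrite -colour_period_nb; congr f; apply: val_inj => /=.
by rewrite -addnA [r + _]addnC modnDr.
Qed.

Lemma colour_mul_r m : f (vtx (m * r)) = f (vtx 0).
Proof. by elim: m => [|m IH] //; rewrite mulSnr colour_period_r. Qed.

Lemma few_colours_absurd : False.
Proof.
have far : b <= (b %/ r).+1 * r <= a - b.
  have := divn_eq b r; have := ltn_pmod b r_gt0.
  have : 2 * b <= n * b by rewrite leq_mul2r n_ge2 orbT.
  by rewrite mulSn; lia.
by move: (colour_vtxD_neq 0 far); rewrite add0n colour_mul_r eqxx.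
Qed.

End FewColours.

Lemma proper_colouring_gt : n < c.
Proof. by rewrite ltnNge; apply/negP => c_le_n; apply: few_colours_absurd. Qed.

End ColouringLowerBound.

Lemma colorable_Gab_gt n b r c : 1 < n -> 0 < b -> 0 < r ->
  colorable (Gab (n * b + r) b) c -> n < c.
Proof.
move=> n_ge2 b_gt0 r_gt0 /existsP [f /forallP proper].
apply: (proper_colouring_gt n_ge2 b_gt0 r_gt0 (f := f)) => x y.
exact: implyP (forallP (proper x) y).
Qed.

Theorem theorem4p2 (n b r : nat) :
  (2 <= n)%N -> (2 <= b)%N -> (1 <= r)%N -> (r < b)%N -> (b - r - 1 <= n)%N ->
  boxicity_le (Gab (n * b + r) b) (chi (@Gab_irr (n * b + r) b)).
Proof.
move=> n_ge2 b_ge2 r_gt0 r_lt_b _.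
exists n.+1; split.
  by rewrite /chi; case: ex_minnP => c col _; apply: colorable_Gab_gt col; lia.
have nb_ge : 2 * b <= n * b by rewrite leq_mul2r n_ge2 orbT.
apply: (@Gab_box_rep _ _ _ (fun i => i * b)) => [| i | y].
- lia.
- by rewrite /= ltnS => i_le; have := leq_mul i_le (leqnn b); lia.
- have y_a := ltn_ord y.
  have y_lt : y %/ b < n.+1 by rewrite ltn_divLR ?mulSn; lia.
  exists (y %/ b) => //.
  have q_lt : y %/ b * b < n * b + r := leq_ltn_trans (leq_divM y b) y_a.
  by rewrite cdist_if // leq_divM {1}(divn_eq y b) addKn ltn_pmod // ltnW.
Qed.
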